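(* For every $i\in\mathbb{N}$ and every situation $t\in[w_i]$, \[ \overline{\mathrm{E}}_t[X_i]=\tfrac12 . \]
   Context: Fair-coin game: in rounds $n=1,2,\dots$ Skeptic announces $M_n\in\mathbb{R}$ (depending only on $x_1,\dots,x_{n-1}$), then Reality announces $x_n\in\{-1,1\}$. A situation is a finite sequence $t=x_1\cdots x_l\in\{-1,1\}^l$. A path is an infinite sequence $\xi=x_1x_2\cdots$, and $\Omega$ is the set of paths. We write $\xi_n$ for the first $n$ terms of $\xi$, and say $\xi$ goes through $t$ if $\xi_l=t$. We write $s_n:=x_1+\cdots+x_n$, with $s_0=0$. A strategy $\mathcal{P}$ assigns a bet to each situation. Its capital process is $\mathcal{K}^{\mathcal{P}}(x_1\cdots x_n)=\sum_{k=1}^n\mathcal{P}(x_1\cdots x_{k-1})x_k$, and $\mathcal{K}^{\mathcal{P}}_n(\xi):=\mathcal{K}^{\mathcal{P}}(\xi_n)$. For a function $x:\Omega\to\mathbb{R}$ and a situation $t$ of length $l$, the upper price of $x$ at $t$ is \[ \overline{\mathrm{E}}_t[x]:=\inf\bigl\{a:\ \exists\mathcal{P}\ \forall\xi \text{ through } t:\ a+\mathcal{K}^{\mathcal{P}}_n(\xi)-\mathcal{K}^{\mathcal{P}}(t)\ge x(\xi)\ \text{for all but finitely many } n\bigr\}. \] Stopping times: set $v_0:=0$, and for $i\ge1$ \[ w_i:=\min\{n>v_{i-1}: s_n=0\},\qquad v_i:=\min\{n>w_i: |s_n|>\sqrt n-1\}, \] with $\min\emptyset=\infty$. Let $[w_i]$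 be the set of situations $\xi_{w_i(\xi)}$ over paths $\xi$ with $w_i(\xi)<\infty$. Finally, $X_i(\xi):=1$ if $v_i(\xi)<\infty$ and $s_{v_i}(\xi)<0$, and $X_i(\xi):=0$ otherwise. *)

From Stdlib Require Import Reals Lra ZArith List ClassicalEpsilon.
From Coquelicot Require Import Coquelicot.
Open Scope R_scope.

(* Reality's moves x_n in {-1,1} are encoded as booleans: true = +1, false = -1. *)
Definition sgnR (b : bool) : R := if b then 1 else -1.
Definition sgnZ (b : bool) : Z := if b then 1%Z else (-1)%Z.

(* A situation t = x_1 ... x_l is a list (in chronological order). *)
Definition situation := list bool.
(* A path xi = x_1 x_2 ...; xi k is x_{k+1}. *)
Definition path := nat -> bool.

Definition prefix (xi : path) (n : nat) : situation := map xi (List.seq 0 n).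

Definition goes_through (xi : path) (t : situation) : Prop :=
  prefix xi (length t) = t.

Definition s (xi : path) (n : nat) : Z :=
  fold_right (fun b acc => (sgnZ b + acc)%Z) 0%Z (prefix xi n).

Definition strategy := situation -> R.

Fixpoint capital_from (P : strategy) (past rest : situation) : R :=
  match rest with
  | nil => 0
  | x :: r => P past * sgnR x + capital_from P (past ++ x :: nil) r
  end.

Definition capital (P : strategy) (t : situation) : R := capital_from P nil t.

Definition capital_n (P : strategy) (n : nat) (xi : path) : R := capital P (prefix xi n).

Definition upper_price (t : situation) (x : path -> R) : Rbar :=
  Glb_Rbar (fun a => exists P : strategy, forall xi : path, goes_through xi t ->
     exists N : nat, forall n : nat, (N <= n)%nat ->
       a + capital_n P n xi - capital P t >= x xi).

Definition first_after (Q : nat -> Prop) (m n : nat) : Prop :=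
  (m < n)%nat /\ Q n /\ forall k, (m < k < n)%nat -> ~ Q k.

Definition zero_cond (xi : path) (k : nat) : Prop := s xi k = 0%Z.
Definition exit_cond (xi : path) (k : nat) : Prop :=
  Rabs (IZR (s xi k)) > sqrt (INR k) - 1.

(* vtime i xi n : v_i(xi) = n (finite).  v_0 = 0. *)
Fixpoint vtime (i : nat) (xi : path) (n : nat) : Prop :=
  match i with
  | O => n = O
  | S j => exists v w, vtime j xi v /\ first_after (zero_cond xi) v w
                       /\ first_after (exit_cond xi) w n
  end.

Definition wtime (i : nat) (xi : path) (n : nat) : Prop :=
  match i with
  | O => False
  | S j => exists v, vtime j xi v /\ first_after (zero_cond xi) v n
  end.

(* [w_i] : situations xi_{w_i(xi)} with w_i(xi) < oo *)
Definition in_stopped (i : nat) (t : situation) : Prop :=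
  exists xi n, wtime i xi n /\ t = prefix xi n.

Definition X (i : nat) (xi : path) : R :=
  if excluded_middle_informative (exists n, vtime i xi n /\ (s xi n < 0)%Z) then 1 else 0.

From Stdlib Require Import Reals.
From Coquelicot Require Import Coquelicot.
From Stdlib Require Import Lra Lia ZArith List ClassicalEpsilon Classical.
Open Scope R_scope.

(* After a situation t in [w_i] the walk is at 0 at time l = |t|, and X_i is the indicator
   that the walk is negative at its first exit after l from the region |s_n| <= sqrt n - 1.
   Cut off at a horizon N, with payoff T if there is no exit by N, this payoff has a value
   process that is a martingale on the binary tree.  Skeptic replicates it by betting half
   its increment, and against any strategy Reality can keep Skeptic's gains below its
   increments.  With T = 1 the payoff dominates X_i, with T = 0 it is dominated by X_i, so
   the upper price lies between the two values at t, which by the reflection symmetry of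
   the walk are (1 -+ q_N)/2, q_N being the probability of no exit by N.  Finally q_N -> 0
   because n - s_n^2 is a martingale. *)

Lemma prefix_length xi n : length (prefix xi n) = n.
Proof. unfold prefix. now rewrite length_map, length_seq. Qed.

Lemma prefix_S xi n : prefix xi (S n) = prefix xi n ++ xi n :: nil.
Proof. unfold prefix. now rewrite seq_S, map_app. Qed.

Lemma nth_prefix xi n k : (k < n)%nat -> nth k (prefix xi n) false = xi k.
Proof.
  intros Hk. unfold prefix.
  rewrite (nth_indep _ false (xi 0%nat)) by (rewrite length_map, length_seq; lia).
  now rewrite map_nth, seq_nth by lia.
Qed.

Lemma prefix_eq_le xi xi' m n :
  prefix xi n = prefix xi' n -> (m <= n)%nat -> prefix xi m = prefix xi' m.
Proof.
  intros Heq Hmn. revert Heq. induction Hmn as [|n Hmn IH]; intros Heq; [exact Heq|].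
  apply IH. rewrite !prefix_S in Heq. now apply app_inj_tail in Heq.
Qed.

Lemma s_S xi n : s xi (S n) = (s xi n + sgnZ (xi n))%Z.
Proof.
  unfold s. rewrite prefix_S. generalize (prefix xi n) as u.
  induction u as [|y u IH]; simpl; [lia|]. rewrite IH. lia.
Qed.

Lemma s_eq_of_prefix xi xi' m n :
  prefix xi n = prefix xi' n -> (m <= n)%nat -> s xi m = s xi' m.
Proof. intros Heq Hmn. unfold s. now rewrite (prefix_eq_le xi xi' m n). Qed.

Lemma capital_from_snoc P past u x :
  capital_from P past (u ++ x :: nil) = capital_from P past u + P (past ++ u) * sgnR x.
Proof.
  revert past. induction u as [|y u IH]; intros past; simpl.
  - rewrite app_nil_r. lra.
  - rewrite IH, <- app_assoc. simpl. lra.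
Qed.

Lemma capital_n_S P xi n :
  capital_n P (S n) xi = capital_n P n xi + P (prefix xi n) * sgnR (xi n).
Proof. unfold capital_n, capital. now rewrite prefix_S, capital_from_snoc. Qed.

Lemma first_after_unique Q m n n' : first_after Q m n -> first_after Q m n' -> n = n'.
Proof.
  intros (Hn & HQn & Hfirst) (Hn' & HQn' & Hfirst').
  destruct (Nat.lt_trichotomy n n') as [H|[H|H]]; [|exact H|].
  - exfalso. apply (Hfirst' n); [lia|exact HQn].
  - exfalso. apply (Hfirst n'); [lia|exact HQn'].
Qed.

Lemma first_after_ext (Q Q' : nat -> Prop) m n :
  (forall k, (k <= n)%nat -> Q k <-> Q' k) -> first_after Q m n -> first_after Q' m n.
Proof.
  intros HQ (Hmn & HQn & Hfirst). split; [exact Hmn|split].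
  - now apply HQ.
  - intros k Hk HQk. apply (Hfirst k Hk). apply HQ; [lia|exact HQk].
Qed.

Lemma first_after_exists (Q : nat -> Prop) m n :
  (exists k, (m < k <= n)%nat /\ Q k) -> exists k, first_after Q m k /\ (k <= n)%nat.
Proof.
  induction n as [|n IH]; intros (k & Hk & HQk); [lia|].
  destruct (classic (exists k, (m < k <= n)%nat /\ Q k)) as [Hex|Hnone].
  - destruct (IH Hex) as (k' & Hk' & Hk'n). exists k'. split; [exact Hk'|lia].
  - exists (S n). assert (k = S n) as ->.
    { apply NNPP. intros Hne. apply Hnone. exists k. split; [lia|exact HQk]. }
    repeat split; [lia|exact HQk| |lia].
    intros k' Hk' HQk'. apply Hnone. exists k'. split; [lia|exact HQk'].
Qed.

Lemma zero_cond_ext xi xi' n k :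
  prefix xi n = prefix xi' n -> (k <= n)%nat -> zero_cond xi k <-> zero_cond xi' k.
Proof. intros Heq Hk. unfold zero_cond. now rewrite (s_eq_of_prefix xi xi' k n). Qed.

Lemma exit_cond_ext xi xi' n k :
  prefix xi n = prefix xi' n -> (k <= n)%nat -> exit_cond xi k <-> exit_cond xi' k.
Proof. intros Heq Hk. unfold exit_cond. now rewrite (s_eq_of_prefix xi xi' k n). Qed.

Lemma vtime_prefix j : forall xi xi' v,
  prefix xi v = prefix xi' v -> vtime j xi v -> vtime j xi' v.
Proof.
  induction j as [|j IH]; intros xi xi' v Heq Hv; [exact Hv|].
  destruct Hv as (v0 & w & Hv0 & Hw & Hv).
  pose proof (proj1 Hw). pose proof (proj1 Hv).
  exists v0, w. split; [|split].
  - apply (IH xi); [apply (prefix_eq_le xi xi' v0 v); [exact Heq|lia]|exact Hv0].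
  - apply (first_after_ext (zero_cond xi)); [|exact Hw].
    intros k Hk. apply (zero_cond_ext xi xi' v); [exact Heq|lia].
  - apply (first_after_ext (exit_cond xi)); [|exact Hv].
    intros k Hk. now apply (exit_cond_ext xi xi' v).
Qed.

Lemma vtime_unique j : forall xi v v', vtime j xi v -> vtime j xi v' -> v = v'.
Proof.
  induction j as [|j IH]; intros xi v v' Hv Hv'; simpl in *; [lia|].
  destruct Hv as (v0 & w & Hv0 & Hw & Hv), Hv' as (v0' & w' & Hv0' & Hw' & Hv').
  rewrite <- (IH xi v0 v0' Hv0 Hv0') in Hw'.
  rewrite <- (first_after_unique _ _ _ _ Hw Hw') in Hv'.
  exact (first_after_unique _ _ _ _ Hv Hv').
Qed.

Lemma wtime_prefix i xi xi' w :
  prefix xi w = prefix xi' w -> wtime i xi w -> wtime i xi' w.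
Proof.
  destruct i as [|j]; [easy|]. intros Heq (v & Hv & Hw).
  pose proof (proj1 Hw). exists v. split.
  - apply (vtime_prefix j xi); [apply (prefix_eq_le xi xi' v w); [exact Heq|lia]|exact Hv].
  - apply (first_after_ext (zero_cond xi)); [|exact Hw].
    intros k Hk. now apply (zero_cond_ext xi xi' w).
Qed.

Lemma vtime_after_wtime j xi w v :
  wtime (S j) xi w -> vtime (S j) xi v <-> first_after (exit_cond xi) w v.
Proof.
  intros (v0 & Hv0 & Hw). split.
  - intros (v1 & w1 & Hv1 & Hw1 & Hv).
    rewrite <- (vtime_unique j xi v0 v1 Hv0 Hv1) in Hw1.
    now rewrite (first_after_unique _ _ _ _ Hw Hw1).
  - intros Hv. exists v0, w. auto.
Qed.

Definition neg_indicator (z : Z) : R := if (z <? 0)%Z then 1 else 0.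

Lemma X_after_wtime i xi w m :
  wtime i xi w -> first_after (exit_cond xi) w m -> X i xi = neg_indicator (s xi m).
Proof.
  destruct i as [|j]; [easy|]. intros Hw Hm. unfold X, neg_indicator.
  destruct (excluded_middle_informative _) as [(v & Hv & Hneg)|Hnone].
  - apply (vtime_after_wtime j xi w v Hw) in Hv.
    rewrite (first_after_unique _ _ _ _ Hm Hv). now rewrite (proj2 (Z.ltb_lt _ _) Hneg).
  - destruct (Z.ltb_spec (s xi m) 0) as [Hneg|]; [|reflexivity].
    exfalso. apply Hnone. exists m. split; [now apply (vtime_after_wtime j xi w m Hw)|exact Hneg].
Qed.

Lemma X_range i xi : 0 <= X i xi <= 1.
Proof. unfold X. destruct (excluded_middle_informative _); lra. Qed.

Lemma s_at_wtime i xi w : wtime i xi w -> s xi w = 0%Z.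
Proof. destruct i as [|j]; [easy|]. now intros (v & _ & _ & Hz & _). Qed.

Lemma wtime_through i t xi : in_stopped i t -> goes_through xi t -> wtime i xi (length t).
Proof.
  intros (xi0 & w & Hw & ->) Hxi. unfold goes_through in Hxi. rewrite prefix_length in *.
  exact (wtime_prefix i xi0 xi w (eq_sym Hxi) Hw).
Qed.

Lemma in_stopped_length i t : in_stopped i t -> (1 <= length t)%nat.
Proof.
  destruct i as [|j]; intros (xi & w & Hw & ->); [easy|].
  rewrite prefix_length. destruct Hw as (v & _ & Hvw & _). lia.
Qed.

Definition superhedging (t : situation) (x : path -> R) (a : R) : Prop :=
  exists P : strategy, forall xi : path, goes_through xi t ->
    exists N : nat, forall n : nat, (N <= n)%nat -> a + capital_n P n xi - capital P t >= x xi.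

Fixpoint play (c : situation -> bool) (n : nat) : situation :=
  match n with
  | O => nil
  | S n => play c n ++ c (play c n) :: nil
  end.

Definition play_path (c : situation -> bool) : path := fun n => c (play c n).

Lemma prefix_play_path c n : prefix (play_path c) n = play c n.
Proof. induction n as [|n IH]; [reflexivity|]. now rewrite prefix_S, IH. Qed.

Lemma play_length c n : length (play c n) = n.
Proof. now rewrite <- prefix_play_path, prefix_length. Qed.

Section BinaryTreeMartingale.

Variable l : nat.
Variable W : situation -> R.
Hypothesis W_martingale : forall u, (l <= length u)%nat ->
  W (u ++ true :: nil) + W (u ++ false :: nil) = 2 * W u.

Definition hedge : strategy := fun u => (W (u ++ true :: nil) - W (u ++ false :: nil)) / 2.

Lemma hedge_gain u x : (l <= length u)%nat -> hedge u * sgnR x = W (u ++ x :: nil) - W u.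
Proof. intros Hu. pose proof (W_martingale u Hu). unfold hedge. destruct x; simpl; lra. Qed.

Lemma capital_hedge xi n : (l <= n)%nat ->
  capital_n hedge n xi - capital_n hedge l xi = W (prefix xi n) - W (prefix xi l).
Proof.
  induction 1 as [|n Hn IH]; [lra|].
  rewrite capital_n_S, prefix_S, hedge_gain by now rewrite prefix_length. lra.
Qed.

Lemma hedge_superhedging t x : length t = l ->
  (forall xi, goes_through xi t -> exists N, forall n, (N <= n)%nat -> x xi <= W (prefix xi n)) ->
  superhedging t x (W t).
Proof.
  intros Hl Hx. exists hedge. intros xi Hxi. destruct (Hx xi Hxi) as [N HN].
  exists (Nat.max N l). intros n Hn.
  pose proof (capital_hedge xi n ltac:(lia)). specialize (HN n ltac:(lia)).
  unfold goes_through in Hxi. rewrite Hl in Hxi. unfold capital_n in *. rewrite Hxi in *. lra.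
Qed.

(* One of Reality's two moves keeps the bet's gain below that of [W]: the increments of
   [W] along the two moves sum to zero, as do those of the bet. *)
Definition reply (P : strategy) (u : situation) : bool :=
  if Rle_dec (P u) (W (u ++ true :: nil) - W u) then true else false.

Lemma reply_gain P u : (l <= length u)%nat ->
  P u * sgnR (reply P u) <= W (u ++ reply P u :: nil) - W u.
Proof.
  intros Hu. pose proof (W_martingale u Hu). unfold reply.
  destruct (Rle_dec _ _); simpl; lra.
Qed.

Lemma capital_reply P xi n :
  (forall k, (l <= k)%nat -> xi k = reply P (prefix xi k)) -> (l <= n)%nat ->
  capital_n P n xi - capital_n P l xi <= W (prefix xi n) - W (prefix xi l).
Proof.
  intros Hxi. induction 1 as [|n Hn IH]; [lra|].
  rewrite capital_n_S, prefix_S, (Hxi n Hn).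
  pose proof (reply_gain P (prefix xi n) ltac:(now rewrite prefix_length)). lra.
Qed.

Definition reality_path (t : situation) (P : strategy) : path :=
  play_path (fun u => if (length u <? l)%nat then nth (length u) t false else reply P u).

Lemma reality_path_through t P : length t = l -> goes_through (reality_path t P) t.
Proof.
  intros Hl. unfold goes_through. apply nth_ext with false false; [apply prefix_length|].
  intros k Hk. rewrite prefix_length in Hk. rewrite nth_prefix by exact Hk.
  unfold reality_path, play_path. rewrite play_length.
  destruct (Nat.ltb_spec k l); [reflexivity|lia].
Qed.

Lemma reality_path_reply t P n : (l <= n)%nat ->
  reality_path t P n = reply P (prefix (reality_path t P) n).
Proof.
  intros Hn. unfold reality_path. rewrite prefix_play_path. unfold play_path.
  rewrite play_length. destruct (Nat.ltb_spec n l); [lia|reflexivity].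
Qed.

Lemma superhedging_ge t x a : length t = l ->
  (forall xi, goes_through xi t -> exists N, forall n, (N <= n)%nat -> W (prefix xi n) <= x xi) ->
  superhedging t x a -> W t <= a.
Proof.
  intros Hl Hx [P HP]. apply Rnot_lt_le. intros Ha.
  pose (xi := reality_path t P).
  assert (Hxi : goes_through xi t) by now apply reality_path_through.
  destruct (HP xi Hxi) as [N1 H1], (Hx xi Hxi) as [N2 H2].
  set (n := Nat.max l (Nat.max N1 N2)).
  pose proof (capital_reply P xi n (reality_path_reply t P) ltac:(lia)).
  specialize (H1 n ltac:(lia)). specialize (H2 n ltac:(lia)).
  unfold goes_through in Hxi. rewrite Hl in Hxi. unfold capital_n in *. rewrite Hxi in *. lra.
Qed.

End BinaryTreeMartingale.

Definition exits (n : nat) (z : Z) : bool :=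
  if Rgt_dec (Rabs (IZR z)) (sqrt (INR n) - 1) then true else false.

(* Expected payoff for the simple random walk at [z] at time [n], run for [k] more steps:
   [b] of its position at the first exit time, or [T] if it does not exit. *)
Fixpoint value (b : Z -> R) (T : R) (k n : nat) (z : Z) : R :=
  match k with
  | O => T
  | S k =>
    let next z' := if exits (S n) z' then b z' else value b T k (S n) z' in
    (next (z + 1)%Z + next (z - 1)%Z) / 2
  end.

Lemma one_le_sqrt_S n : 1 <= sqrt (INR (S n)).
Proof.
  rewrite <- sqrt_1. apply sqrt_le_1_alt. rewrite S_INR. pose proof (pos_INR n). lra.
Qed.

Lemma exits_S_0 n : exits (S n) 0 = false.
Proof.
  unfold exits. destruct (Rgt_dec _ _) as [H|]; [|reflexivity].
  rewrite Rabs_R0 in H. pose proof (one_le_sqrt_S n). lra.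
Qed.

Lemma exits_opp n z : exits n (- z) = exits n z.
Proof. unfold exits. now rewrite opp_IZR, Rabs_Ropp. Qed.

Lemma value_add b1 b2 T1 T2 k : forall n z,
  value (fun z => b1 z + b2 z) (T1 + T2) k n z = value b1 T1 k n z + value b2 T2 k n z.
Proof.
  induction k as [|k IH]; intros n z; simpl; [reflexivity|].
  rewrite !IH. destruct (exits (S n) (z + 1)), (exits (S n) (z - 1)); lra.
Qed.

Lemma value_ext b b' T k : (forall z, z <> 0%Z -> b z = b' z) ->
  forall n z, value b T k n z = value b' T k n z.
Proof.
  intros Hb. induction k as [|k IH]; intros n z; simpl; [reflexivity|].
  assert (Hexit : forall z', exits (S n) z' = true -> b z' = b' z').
  { intros z' E. apply Hb. intros ->. now rewrite exits_S_0 in E. }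
  rewrite !IH.
  destruct (exits (S n) (z + 1)) eqn:E1, (exits (S n) (z - 1)) eqn:E2;
    try rewrite (Hexit _ E1); try rewrite (Hexit _ E2); reflexivity.
Qed.

Lemma value_const c k : forall n z, value (fun _ => c) c k n z = c.
Proof.
  induction k as [|k IH]; intros n z; simpl; [reflexivity|].
  rewrite !IH. destruct (exits (S n) (z + 1)), (exits (S n) (z - 1)); lra.
Qed.

Lemma value_opp b T k : forall n z, value b T k n (- z) = value (fun z => b (- z)%Z) T k n z.
Proof.
  induction k as [|k IH]; intros n z; simpl; [reflexivity|].
  replace (- z + 1)%Z with (- (z - 1))%Z by lia.
  replace (- z - 1)%Z with (- (z + 1))%Z by lia.
  rewrite !exits_opp, !IH. lra.
Qed.

Definition survival (k n : nat) (z : Z) : R := value (fun _ => 0) 1 k n z.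

Lemma value_neg_indicator_0 k n : value neg_indicator 0 k n 0 = (1 - survival k n 0) / 2.
Proof.
  pose (pos_indicator z := if (0 <? z)%Z then 1 else 0).
  assert (Hsym : value neg_indicator 0 k n 0 = value pos_indicator 0 k n 0).
  { transitivity (value neg_indicator 0 k n (- 0)); [reflexivity|].
    rewrite value_opp. apply value_ext. intros z _. unfold neg_indicator, pos_indicator.
    destruct (Z.ltb_spec (- z) 0), (Z.ltb_spec 0 z); lia || reflexivity. }
  assert (Hsplit : 1 = value neg_indicator 0 k n 0 + value pos_indicator 0 k n 0 + survival k n 0).
  { unfold survival. rewrite <- !value_add. rewrite <- (value_const 1 k n 0) at 1.
    replace (0 + 0 + 1) with 1 by lra. apply value_ext. intros z Hz.
    unfold neg_indicator, pos_indicator.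
    destruct (Z.ltb_spec z 0), (Z.ltb_spec 0 z); lra || lia. }
  lra.
Qed.

Lemma value_neg_indicator_1 k n : value neg_indicator 1 k n 0 = (1 + survival k n 0) / 2.
Proof.
  pose proof (value_add neg_indicator (fun _ => 0) 0 1 k n 0) as Hadd.
  rewrite Rplus_0_l, (value_ext (fun z => neg_indicator z + 0) neg_indicator) in Hadd
    by (intros; lra).
  fold (survival k n 0) in Hadd. rewrite value_neg_indicator_0 in Hadd. lra.
Qed.

(* [n - z^2] is a martingale of the walk; it is nonnegative at the exit time, since the walk
   enters [|z| > sqrt m - 1] from [|z| <= sqrt (m-1) - 1], and at least [2 sqrt m - 1] at a
   horizon [m] not yet exited. *)
Lemma survival_bound k : forall n z, (1 <= n)%nat -> Rabs (IZR z) <= sqrt (INR n) - 1 ->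
  survival k n z * (2 * sqrt (INR (n + k)) - 1) <= INR n - IZR z ^ 2.
Proof.
  unfold survival. induction k as [|k IH]; intros n z Hn Hz; simpl value.
  - rewrite Nat.add_0_r, <- pow2_abs.
    assert (Hr : 1 <= sqrt (INR n)) by (destruct n; [lia|apply one_le_sqrt_S]).
    pose proof (sqrt_sqrt (INR n) (pos_INR n)). pose proof (Rabs_pos (IZR z)). nra.
  - replace (n + S k)%nat with (S n + k)%nat by lia.
    set (D := 2 * sqrt (INR (S n + k)) - 1).
    assert (Hnext : forall z', Rabs (IZR z') <= Rabs (IZR z) + 1 ->
      (if exits (S n) z' then 0 else value (fun _ => 0) 1 k (S n) z') * D
        <= INR (S n) - IZR z' ^ 2).
    { intros z' Hz'. destruct (exits (S n) z') eqn:E.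
      - rewrite Rmult_0_l, S_INR, <- pow2_abs.
        pose proof (sqrt_sqrt (INR n) (pos_INR n)). pose proof (Rabs_pos (IZR z')). nra.
      - apply IH; [lia|]. unfold exits in E. destruct (Rgt_dec _ _); [discriminate|lra]. }
    pose proof (Hnext (z + 1)%Z) as Hup. pose proof (Hnext (z - 1)%Z) as Hdown.
    rewrite plus_IZR in Hup. rewrite minus_IZR in Hdown.
    specialize (Hup ltac:(eapply Rle_trans; [apply Rabs_triang|]; rewrite Rabs_R1; lra)).
    specialize (Hdown ltac:(eapply Rle_trans; [apply Rabs_triang|]; rewrite Rabs_Ropp, Rabs_R1; lra)).
    rewrite S_INR in Hup, Hdown. nra.
Qed.

Lemma survival_vanishes n eps : (1 <= n)%nat -> 0 < eps -> exists k, survival k n 0 < eps.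
Proof.
  intros Hn Heps. set (c := (INR n / eps + 1) / 2).
  assert (Hc : 0 <= c).
  { pose proof (Rdiv_le_0_compat (INR n) eps (pos_INR n) Heps). unfold c. lra. }
  destruct (INR_unbounded (c * c)) as [k Hk]. exists k.
  assert (Hsqrt : c < sqrt (INR (n + k))).
  { rewrite <- (sqrt_square c Hc). apply sqrt_lt_1_alt. rewrite plus_INR.
    pose proof (pos_INR n). nra. }
  assert (Hmargin : INR n < eps * (2 * sqrt (INR (n + k)) - 1)).
  { replace (INR n) with (eps * (2 * c - 1)) by (unfold c; field; apply Rgt_not_eq, Heps). nra. }
  pose proof (survival_bound k n 0 Hn) as Hbound. rewrite Rabs_R0 in Hbound.
  specialize (Hbound ltac:(destruct n; [lia|pose proof (one_le_sqrt_S n); lra])).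
  simpl in Hbound.
  set (D := 2 * sqrt (INR (n + k)) - 1) in *.
  assert (HD : 0 < D) by (pose proof (pos_INR n); nra).
  apply Rnot_le_lt. intros Hge.
  pose proof (Rmult_le_compat_r D eps (survival k n 0) (Rlt_le _ _ HD) Hge). lra.
Qed.

(* [payoff] is [Some v] once the walk has been stopped with payoff [v]. *)
Record walk_state : Type := WalkState { time : nat; pos : Z; payoff : option R }.

Section StoppedWalk.

Variables (b : Z -> R) (T : R) (l N : nat).

Definition walk_step (st : walk_state) (x : bool) : walk_state :=
  let m := S (time st) in
  let z := (pos st + sgnZ x)%Z in
  WalkState m z
    (match payoff st with
     | Some v => Some v
     | None => if ((l <? m)%nat && (m <=? N)%nat && exits m z)%bool then Some (b z) else None
     end).

Definition walk (u : situation) : walk_state := fold_left walk_step u (WalkState 0 0 None).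

Definition stopped_value (u : situation) : R :=
  match payoff (walk u) with
  | Some v => v
  | None => value b T (N - time (walk u)) (time (walk u)) (pos (walk u))
  end.

Lemma walk_snoc u x : walk (u ++ x :: nil) = walk_step (walk u) x.
Proof. apply fold_left_app. Qed.

Lemma time_walk u : time (walk u) = length u.
Proof.
  induction u as [|x u IH] using rev_ind; [reflexivity|].
  rewrite walk_snoc, length_app. simpl. lia.
Qed.

Lemma pos_walk_prefix xi n : pos (walk (prefix xi n)) = s xi n.
Proof.
  induction n as [|n IH]; [reflexivity|].
  rewrite prefix_S, walk_snoc, s_S. simpl. now rewrite IH.
Qed.

Lemma stopped_value_martingale u : (l <= length u)%nat ->
  stopped_value (u ++ true :: nil) + stopped_value (u ++ false :: nil) = 2 * stopped_value u.
Proof.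
  intros Hu. unfold stopped_value. rewrite !walk_snoc. rewrite <- (time_walk u) in Hu.
  destruct (walk u) as [n z [v|]]; cbv beta iota zeta delta [walk_step time pos payoff] in *;
    [lra|].
  replace (l <? S n)%nat with true by (symmetry; apply Nat.ltb_lt; lia).
  replace (z + sgnZ false)%Z with (z - 1)%Z by (simpl; lia). change (sgnZ true) with 1%Z.
  destruct (Nat.leb_spec (S n) N).
  - replace (N - n)%nat with (S (N - S n)) by lia. simpl.
    destruct (exits (S n) (z + 1)), (exits (S n) (z - 1)); lra.
  - replace (N - n)%nat with 0%nat by lia. replace (N - S n)%nat with 0%nat by lia.
    simpl. lra.
Qed.

Lemma payoff_walk_early u : (length u <= l)%nat -> payoff (walk u) = None.
Proof.
  induction u as [|x u IH] using rev_ind; intros Hu; [reflexivity|].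
  rewrite length_app in Hu. simpl in Hu.
  rewrite walk_snoc. unfold walk_step. rewrite IH by lia. rewrite time_walk.
  replace (l <? S (length u))%nat with false by (symmetry; apply Nat.ltb_ge; lia).
  reflexivity.
Qed.

Lemma payoff_walk_alive xi n :
  (forall k, (l < k <= Nat.min n N)%nat -> ~ exit_cond xi k) ->
  payoff (walk (prefix xi n)) = None.
Proof.
  induction n as [|n IH]; intros Halive; [reflexivity|].
  rewrite prefix_S, walk_snoc. unfold walk_step.
  rewrite IH by (intros k Hk; apply Halive; lia).
  rewrite time_walk, prefix_length, pos_walk_prefix, <- s_S.
  destruct (Nat.ltb_spec l (S n)), (Nat.leb_spec (S n) N); simpl; try reflexivity.
  unfold exits. destruct (Rgt_dec _ _) as [He|]; [|reflexivity].
  exfalso. apply (Halive (S n)); [lia|exact He].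
Qed.

Lemma payoff_walk_exited xi m n :
  first_after (exit_cond xi) l m -> (m <= n)%nat -> (m <= N)%nat ->
  payoff (walk (prefix xi n)) = Some (b (s xi m)).
Proof.
  intros Hm Hmn HmN. induction Hmn as [|n Hmn IH].
  - destruct m as [|m]; [destruct Hm; lia|].
    destruct Hm as (Hlm & Hexit & Hfirst).
    rewrite prefix_S, walk_snoc. unfold walk_step.
    rewrite payoff_walk_alive by (intros k Hk; apply Hfirst; lia).
    rewrite time_walk, prefix_length, pos_walk_prefix, <- s_S.
    replace (l <? S m)%nat with true by (symmetry; apply Nat.ltb_lt; lia).
    replace (S m <=? N)%nat with true by (symmetry; apply Nat.leb_le; lia).
    unfold exits. destruct (Rgt_dec _ _); [reflexivity|contradiction].
  - rewrite prefix_S, walk_snoc. unfold walk_step. now rewrite IH.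
Qed.

Lemma stopped_value_start u : (length u <= l)%nat ->
  stopped_value u = value b T (N - length u) (length u) (pos (walk u)).
Proof. intros Hu. unfold stopped_value. now rewrite payoff_walk_early, time_walk. Qed.

Lemma stopped_value_eventually xi n : (N <= n)%nat ->
  (exists m, first_after (exit_cond xi) l m /\ stopped_value (prefix xi n) = b (s xi m))
  \/ stopped_value (prefix xi n) = T.
Proof.
  intros HNn.
  destruct (classic (exists k, (l < k <= N)%nat /\ exit_cond xi k)) as [Hex|Hnone].
  - left. destruct (first_after_exists _ l N Hex) as (m & Hm & HmN).
    exists m. split; [exact Hm|].
    unfold stopped_value. now rewrite (payoff_walk_exited xi m n Hm) by lia.
  - right. unfold stopped_value.
    rewrite payoff_walk_alive by (intros k Hk Hexit; apply Hnone; exists k; split; [lia|exact Hexit]).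
    rewrite time_walk, prefix_length. now replace (N - n)%nat with 0%nat by lia.
Qed.

End StoppedWalk.

Lemma Glb_Rbar_approx (E : R -> Prop) (c : R) :
  (forall a, E a -> c <= a) -> (forall eps, 0 < eps -> exists a, E a /\ a < c + eps) ->
  Glb_Rbar E = Finite c.
Proof.
  intros Hlb Happrox. apply is_glb_Rbar_unique. split.
  - intros a Ha. exact (Hlb a Ha).
  - intros [d| |] Hd; simpl.
    + apply Rnot_lt_le. intros Hcd. destruct (Happrox (d - c)) as (a & Ha & Hac); [lra|].
      specialize (Hd a Ha). simpl in Hd. lra.
    + destruct (Happrox 1 Rlt_0_1) as (a & Ha & _). exact (Hd a Ha).
    + exact I.
Qed.

Lemma stopped_value_in_stopped i t b T N : in_stopped i t ->
  stopped_value b T (length t) N t = value b T (N - length t) (length t) 0.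
Proof.
  intros Ht. rewrite stopped_value_start by lia. f_equal.
  destruct Ht as (xi & w & Hw & ->). rewrite prefix_length, pos_walk_prefix.
  exact (s_at_wtime i xi w Hw).
Qed.

Lemma superhedging_upper i t k : in_stopped i t ->
  superhedging t (X i) ((1 + survival k (length t) 0) / 2).
Proof.
  intros Ht. set (W := stopped_value neg_indicator 1 (length t) (length t + k)).
  replace ((1 + survival k (length t) 0) / 2) with (W t).
  2:{ unfold W. rewrite (stopped_value_in_stopped i) by exact Ht.
      replace (length t + k - length t)%nat with k by lia. apply value_neg_indicator_1. }
  apply (hedge_superhedging (length t)); [apply stopped_value_martingale|reflexivity|].
  intros xi Hxi. exists (length t + k)%nat. intros n Hn.
  pose proof (wtime_through i t xi Ht Hxi) as Hw.
  destruct (stopped_value_eventually neg_indicator 1 (length t) (length t + k) xi n Hn)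
    as [(m & Hm & Hval)|Hval]; unfold W; rewrite Hval.
  - rewrite (X_after_wtime i xi (length t) m Hw Hm). lra.
  - pose proof (X_range i xi). lra.
Qed.

Lemma superhedging_lower i t k a : in_stopped i t ->
  superhedging t (X i) a -> (1 - survival k (length t) 0) / 2 <= a.
Proof.
  intros Ht. set (W := stopped_value neg_indicator 0 (length t) (length t + k)).
  replace ((1 - survival k (length t) 0) / 2) with (W t).
  2:{ unfold W. rewrite (stopped_value_in_stopped i) by exact Ht.
      replace (length t + k - length t)%nat with k by lia. apply value_neg_indicator_0. }
  apply (superhedging_ge (length t)); [apply stopped_value_martingale|reflexivity|].
  intros xi Hxi. exists (length t + k)%nat. intros n Hn.
  pose proof (wtime_through i t xi Ht Hxi) as Hw.
  destruct (stopped_value_eventually neg_indicator 0 (length t) (length t + k) xi n Hn)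
    as [(m & Hm & Hval)|Hval]; unfold W; rewrite Hval.
  - rewrite (X_after_wtime i xi (length t) m Hw Hm). lra.
  - pose proof (X_range i xi). lra.
Qed.

Theorem mainTheorem12 : forall (i : nat) (t : situation),
  (1 <= i)%nat -> in_stopped i t -> upper_price t (X i) = Finite (1 / 2).
Proof.
  intros i t _ Ht. pose proof (in_stopped_length i t Ht) as Hl.
  apply Glb_Rbar_approx.
  - intros a Ha. apply Rnot_lt_le. intros Ha'.
    destruct (survival_vanishes (length t) (1 - 2 * a) Hl) as [k Hk]; [lra|].
    pose proof (superhedging_lower i t k a Ht Ha). lra.
  - intros eps Heps.
    destruct (survival_vanishes (length t) (2 * eps) Hl) as [k Hk]; [lra|].
    exists ((1 + survival k (length t) 0) / 2).
    split; [exact (superhedging_upper i t k Ht)|lra].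
Qed.
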